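(* Let $l,l'$ be two nonparallel lines intersecting at a point $O$, and let $X,X'$ be two points lying in the same quadrant divided by $l,l'$. Let $Q(X,X',l,l')$ denote the unique (possibly degenerate) parallelogram that has a pair of opposite corners at $X,X'$ and its other two corners on $l$ and $l'$ respectively. Let $\theta$ denote the angle of the quadrant divided by $l,l'$ that contains $X,X'$. Then \begin{equation*} Area\left(Q(X,X',l,l')\right)=\left| d_l(X)\,d_{l'}(X)-d_l(X')\,d_{l'}(X')\right| / \sin \theta, \end{equation*} where $d_l(Z)$ denotes the distance from a point $Z$ to the line $l$.
   Context: Concretely, $Q(X,X',l,l')$ is constructed as follows: let $M$ be the midpoint of $X$ and $X'$; let $Y$ be the intersection of $l$ with the reflection of $l'$ about $M$, and $Y'$ the intersection of $l'$ with the reflection of $l$ about $M$. Then $Y,Y'$ is the unique pair of points with $Y\in l$, $Y'\in l'$ and midpoint $M$, so $XYX'Y'$ is a parallelogram (possibly degenerate, i.e., with all four corners on one line), and it is the unique such parallelogram with opposite corners $X,X'$ and the other two corners on $l,l'$ respectively. The quantity $d_l(Z)\,d_{l'}(Z)$ is called the distance-product of $Z$ to the lines $l,l'$. *)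

From HB Require Import structures.
From mathcomp Require Import all_boot all_order all_algebra.
From mathcomp Require Import all_classical all_reals all_analysis.
Set Implicit Arguments. Unset Strict Implicit. Unset Printing Implicit Defensive.
Import Order.TTheory GRing.Theory Num.Theory.
Local Open Scope classical_set_scope.
Local Open Scope ring_scope.

Section Plane.
Variable R : realType.
Definition plane_pt := (R * R)%type.

Definition padd (p q : plane_pt) : plane_pt := (p.1 + q.1, p.2 + q.2).
Definition psub (p q : plane_pt) : plane_pt := (p.1 - q.1, p.2 - q.2).
Definition pscale (t : R) (p : plane_pt) : plane_pt := (t * p.1, t * p.2).
Definition dot (p q : plane_pt) : R := p.1 * q.1 + p.2 * q.2.
Definition cross (p q : plane_pt) : R := p.1 * q.2 - p.2 * q.1.
Definition pnorm (p : plane_pt) : R := Num.sqrt (dot p p).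

Definition is_line (l : set plane_pt) : Prop :=
  exists P d : plane_pt, d != (0, 0) /\ l = [set Z | exists t : R, Z = padd P (pscale t d)].

Definition parallel (l l' : set plane_pt) : Prop :=
  exists v : plane_pt, l' = [set padd Z v | Z in l].

Definition same_side (l : set plane_pt) (A B : plane_pt) : Prop :=
  ~ l A /\ ~ l B /\
  forall t : R, 0 <= t <= 1 -> ~ l (padd A (pscale t (psub B A))).

Definition same_quadrant (l l' : set plane_pt) (A B : plane_pt) : Prop :=
  same_side l A B /\ same_side l' A B.

Definition dist_line (l : set plane_pt) (Z : plane_pt) : R :=
  inf [set pnorm (psub Z Y) | Y in l].

Definition angle (A O B : plane_pt) : R :=
  acos (dot (psub A O) (psub B O) / (pnorm (psub A O) * pnorm (psub B O))).

(* area of the (possibly degenerate) parallelogram with consecutive corners X, Y, X', Y' *)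
Definition para_area (X Y X' Y' : plane_pt) : R :=
  `| cross (psub Y X) (psub Y' X) |.
End Plane.

From HB Require Import structures.
From mathcomp Require Import all_boot all_order all_algebra.
From mathcomp Require Import all_classical all_reals all_analysis.
From mathcomp Require Import ring lra.
Import Order.TTheory GRing.Theory Num.Theory.
Local Open Scope classical_set_scope.
Local Open Scope ring_scope.
Set Implicit Arguments. Unset Strict Implicit.

(* With direction vectors a := A - O of l and b := B - O of l', put
   f Z := cross (Z - O) a and g Z := cross (Z - O) b, signed multiples of the
   distances: d_l = |f| / |a|, d_l' = |g| / |b|, and by Lagrange's identity
   sin theta = |cross a b| / (|a| |b|). Writing Y = O + s a, Y' = O + t b and
   X' = Y + Y' - X, the area is |cross (Y - X) (Y' - X)|, and a direct
   expansion gives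
     cross (Y - X) (Y' - X) * cross a b = f X * g X - f X' * g X'.
   As X, X' lie in the same quadrant, f X, f X' have the same sign and so do
   g X, g X', so the difference of the products is, up to sign, the difference
   of the distance-products. *)

Lemma affine_root01 (F : realFieldType) (f f' : F) : f * f' <= 0 ->
  exists2 t, 0 <= t <= 1 & f + t * (f' - f) = 0.
Proof.
move=> hff'; have [->|hf] := eqVneq f 0.
  by exists 0; rewrite ?lexx ?ler01 // mul0r addr0.
have hf2 : 0 < f ^+ 2 by rewrite lt_def sqrf_eq0 hf sqr_ge0.
have hd : 0 < f ^+ 2 - f * f' by lra.
exists (f ^+ 2 / (f ^+ 2 - f * f')).
  by rewrite divr_ge0 ?sqr_ge0 ?(ltW hd) //= ler_pdivrMr // mul1r; lra.
by field; rewrite gt_eqF.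
Qed.

Lemma normr_sub_same_sign (F : realDomainType) (x y : F) : 0 < x * y ->
  `| `|x| - `|y| | = `|x - y|.
Proof.
have [hx|hx|->] := ltrgt0P x; last by rewrite mul0r ltxx.
  by rewrite (pmulr_rgt0 _ hx) => hy; rewrite (gtr0_norm hy).
by rewrite (nmulr_rgt0 _ hx) => hy; rewrite (ltr0_norm hy) opprK addrC distrC.
Qed.

Section PlaneGeometry.
Variable R : realType.
Implicit Types (O X Y Z A B u v w : plane_pt R).

Definition line_through O u : set (plane_pt R) := [set Z | cross (psub Z O) u = 0].

Lemma psub_neq0 A O : A != O -> psub A O != (0, 0).
Proof.
case: A O => x1 x2 [p1 p2]; apply: contra => /eqP[/eqP h1 /eqP h2].
by rewrite xpair_eqE -(subr_eq0 x1) -(subr_eq0 x2) h1 h2.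
Qed.

Lemma cross_scaler w k u : cross w (pscale k u) = k * cross w u.
Proof. by case: w u => w1 w2 [u1 u2]; rewrite /cross /=; ring. Qed.

Lemma dot_self_ge0 u : 0 <= dot u u.
Proof. by case: u => u1 u2; rewrite /dot -!expr2 addr_ge0 ?sqr_ge0. Qed.

Lemma dot_self_gt0 u : u != (0, 0) -> 0 < dot u u.
Proof.
case: u => u1 u2 hu; rewrite lt_def dot_self_ge0 andbT /dot /= -!expr2.
rewrite paddr_eq0 ?sqr_ge0 // !sqrf_eq0.
by apply: contra hu => /andP[/eqP-> /eqP->].
Qed.

Lemma pnorm_sq u : pnorm u ^+ 2 = dot u u.
Proof. by rewrite /pnorm sqr_sqrtr ?dot_self_ge0. Qed.

Lemma pnorm_gt0 u : u != (0, 0) -> 0 < pnorm u.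
Proof. by move=> hu; rewrite /pnorm sqrtr_gt0 dot_self_gt0. Qed.

Lemma lagrange_identity w u : dot w w * dot u u = dot w u ^+ 2 + cross w u ^+ 2.
Proof. by case: w u => w1 w2 [u1 u2]; rewrite /dot /cross /=; ring. Qed.

Lemma normr_cross_le w u : `|cross w u| <= pnorm w * pnorm u.
Proof.
rewrite /pnorm -sqrtrM ?dot_self_ge0 // -sqrtr_sqr; apply: ler_wsqrtr.
by rewrite lagrange_identity lerDr sqr_ge0.
Qed.

Lemma pnorm_mul_orth w u : dot w u = 0 -> pnorm w * pnorm u = `|cross w u|.
Proof.
move=> h; rewrite /pnorm -sqrtrM ?dot_self_ge0 // lagrange_identity h.
by rewrite expr0n add0r sqrtr_sqr.
Qed.

Lemma cross_eq0_scale w u : u != (0, 0) -> cross w u = 0 ->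
  exists k, w = pscale k u.
Proof.
move=> /dot_self_gt0 hD h; exists (dot w u / dot u u).
have hD0 : dot u u != 0 by rewrite gt_eqF.
move: h hD0; case: w u {hD} => w1 w2 [u1 u2]; rewrite /cross /dot /pscale /=.
move=> h hD0; congr pair; apply/eqP; rewrite -subr_eq0; apply/eqP.
  have -> : w1 - (w1 * u1 + w2 * u2) / (u1 * u1 + u2 * u2) * u1 =
      u2 * (w1 * u2 - w2 * u1) / (u1 * u1 + u2 * u2) by field.
  by rewrite h mulr0 mul0r.
have -> : w2 - (w1 * u1 + w2 * u2) / (u1 * u1 + u2 * u2) * u2 =
    - u1 * (w1 * u2 - w2 * u1) / (u1 * u1 + u2 * u2) by field.
by rewrite h mulr0 mul0r.
Qed.

Lemma line_throughP O u Z : u != (0, 0) ->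
  line_through O u Z <-> exists t, Z = padd O (pscale t u).
Proof.
move=> hu; split=> [h|[t ->]]; last first.
  by case: O u {hu} => p1 p2 [u1 u2]; rewrite /line_through /cross /=; ring.
have [t e] := cross_eq0_scale hu h; exists t; move: e.
case: Z O u {h hu} => z1 z2 [p1 p2] [u1 u2].
by rewrite /psub /padd /pscale /= => -[e1 e2]; congr pair; lra.
Qed.

Lemma line_through_scale O u k : k != 0 ->
  line_through O (pscale k u) = line_through O u.
Proof.
move=> hk; apply/seteqP; split=> Z; rewrite /line_through /= cross_scaler.
  by move/eqP; rewrite mulf_eq0 (negbTE hk) => /eqP.
by move->; rewrite mulr0.
Qed.

Lemma line_through_dir O u v : u != (0, 0) -> v != (0, 0) -> cross u v = 0 ->
  line_through O u = line_through O v.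
Proof.
move=> hu hv /(cross_eq0_scale hv)[k eu].
rewrite eu line_through_scale //; apply: contraNneq hu => k0.
by rewrite eu k0; case: (v) => ? ?; rewrite /pscale /= !mul0r.
Qed.

Lemma is_line_through l O A : is_line l -> l O -> l A -> A != O ->
  l = line_through O (psub A O).
Proof.
case=> P [d [hd el]] hO hA hAO; have hAO' := psub_neq0 hAO.
suff ld : l = line_through O d.
  by rewrite ld (line_through_dir _ hAO' hd) //; move: hA; rewrite ld.
rewrite {hA}el in hO *; case: hO => t0 eO; apply/seteqP; split=> Z /=.
  case=> t ->; rewrite eO; case: P d {hd eO} => p1 p2 [d1 d2].
  by rewrite /line_through /cross /psub /padd /pscale /=; ring.
case/(line_throughP _ _ hd)=> t ->; exists (t0 + t); rewrite eO.
by case: P d {hd eO} => p1 p2 [d1 d2]; rewrite /padd /pscale /=; congr pair; ring.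
Qed.

Lemma not_parallel_cross O u v : u != (0, 0) -> v != (0, 0) ->
  ~ parallel (line_through O u) (line_through O v) -> cross u v != 0.
Proof.
move=> hu hv hnp; apply/eqP => c0; apply: hnp; exists (0, 0).
rewrite (line_through_dir _ hu hv c0); apply/seteqP; split=> Z /=.
  by move=> hZ; exists Z => //; case: Z {hZ} => ? ?; rewrite /padd /= !addr0.
by case=> Z' hZ' <-; case: Z' hZ' => ? ?; rewrite /padd /= !addr0.
Qed.

Lemma dist_line_through O u Z : u != (0, 0) ->
  dist_line (line_through O u) Z = `|cross (psub Z O) u| / pnorm u.
Proof.
move=> hu; have hn := pnorm_gt0 hu; have hD := dot_self_gt0 hu.
rewrite /dist_line; set S := [set _ | _ in _]; set m := _ / _.
have hlb : lbound S m.
  move=> _ [Y hY <-]; rewrite ler_pdivrMr //.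
  suff -> : cross (psub Z O) u = cross (psub Z Y) u by apply: normr_cross_le.
  move: hY; rewrite /line_through /=.
  by case: (Z) (Y) (O) (u) => ? ? [? ?] [? ?] [? ?]; rewrite /cross /=; lra.
pose Y0 := padd O (pscale (dot (psub Z O) u / dot u u) u).
have hY0 : line_through O u Y0.
  by rewrite /Y0; case: (O) (u) => ? ? [? ?]; rewrite /line_through /cross /=; ring.
have [orth cross0] : dot (psub Z Y0) u = 0 /\ cross (psub Z Y0) u = cross (psub Z O) u.
  rewrite /Y0; case: (Z) (O) (u) hD => z1 z2 [p1 p2] [u1 u2].
  by rewrite /dot /cross /= => hD; split; field; rewrite gt_eqF.
have SY0 : S m.
  by exists Y0 => //; rewrite /m -cross0 -pnorm_mul_orth // mulfK // gt_eqF.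
apply/eqP; rewrite eq_le (ge_inf (ex_intro _ m hlb) SY0) lb_le_inf //.
by exists m.
Qed.

Lemma same_side_cross O u X X' : same_side (line_through O u) X X' ->
  0 < cross (psub X O) u * cross (psub X' O) u.
Proof.
case=> _ [_ hseg]; rewrite ltNge; apply/negP => /affine_root01[t t01 ht].
apply: (hseg t t01); rewrite /line_through /= -{}ht.
by case: (X) (X') (O) (u) => ? ? [? ?] [? ?] [? ?]; rewrite /cross /=; ring.
Qed.

Lemma sin_angle A O B : A != O -> B != O ->
  sin (angle A O B) =
  `|cross (psub A O) (psub B O)| / (pnorm (psub A O) * pnorm (psub B O)).
Proof.
move=> /psub_neq0 ha /psub_neq0 hb; rewrite /angle.
move: (psub A O) (psub B O) ha hb => a b ha hb.
have hN : 0 < pnorm a * pnorm b by rewrite mulr_gt0 ?pnorm_gt0.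
set r := _ / _; set s := _ / _.
have hD : dot a a * dot b b != 0 by rewrite mulf_neq0 // gt_eqF // dot_self_gt0.
have key : 1 - r ^+ 2 = s ^+ 2.
  rewrite /r /s !expr_div_n real_normK ?num_real // exprMn !pnorm_sq.
  by rewrite -{1}(divff hD) -mulrBl lagrange_identity addrC addKr.
have r1 : -1 <= r <= 1.
  have r2 : r ^+ 2 <= 1 by rewrite -subr_ge0 key sqr_ge0.
  by apply/andP; split; nra.
by rewrite sin_acos // key sqrtr_sqr ger0_norm // divr_ge0 // ltW.
Qed.

Lemma parallelogram_cross O a b X X' Y Y' : a != (0, 0) -> b != (0, 0) ->
  line_through O a Y -> line_through O b Y' -> padd Y Y' = padd X X' ->
  cross (psub Y X) (psub Y' X) * cross a b =
  cross (psub X O) a * cross (psub X O) b - cross (psub X' O) a * cross (psub X' O) b.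
Proof.
move=> ha hb /(line_throughP _ _ ha)[s ->] /(line_throughP _ _ hb)[t ->] hmid.
have -> : X' = psub (padd X X') X.
  by case: (X) (X') => ? ? [? ?]; rewrite /psub /padd /=; congr pair; ring.
rewrite -{}hmid; case: O a b X {ha hb} => ? ? [? ?] [? ?] [? ?].
by rewrite /cross /psub /padd /pscale /=; ring.
Qed.

End PlaneGeometry.

Lemma scaled_products_sub (F : realFieldType) (f g f' g' m n : F) :
  0 < m -> 0 < n -> 0 < f * f' -> 0 < g * g' ->
  `| `|f| / m * (`|g| / n) - `|f'| / m * (`|g'| / n)| = `|f * g - f' * g'| / (m * n).
Proof.
move=> hm hn hf hg; have hmn : 0 < m * n by rewrite mulr_gt0.
have -> : `|f| / m * (`|g| / n) - `|f'| / m * (`|g'| / n) =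
    (`|f * g| - `|f' * g'|) / (m * n).
  by rewrite !normrM; field; rewrite !gt_eqF.
rewrite normrM normfV (gtr0_norm hmn) normr_sub_same_sign //.
by rewrite mulrACA mulr_gt0.
Qed.

Unset Implicit Arguments.

Theorem lemma9 (R : realType) (l l' : set (plane_pt R)) (O X X' : plane_pt R)
  (hl : is_line l) (hl' : is_line l') (hnp : ~ parallel l l')
  (hOl : l O) (hOl' : l' O)
  (hq : same_quadrant l l' X X')
  (* Y, Y' : the other two corners of Q(X,X',l,l'), i.e. Y in l, Y' in l',
     with midpoint of Y Y' equal to the midpoint of X X' *)
  (Y Y' : plane_pt R) (hY : l Y) (hY' : l' Y')
  (hmid : padd Y Y' = padd X X')
  (* A, B : points on the two boundary rays (from O, on l and l') of the
     quadrant containing X, X'; theta = angle A O B *)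
  (A B : plane_pt R) (hA : l A) (hAO : A <> O) (hAs : same_side l' A X)
  (hB : l' B) (hBO : B <> O) (hBs : same_side l B X) :
  para_area X Y X' Y' =
  `| dist_line l X * dist_line l' X - dist_line l X' * dist_line l' X' |
    / sin (angle A O B).
Proof.
move/eqP: hAO => hAO; move/eqP: hBO => hBO.
have ha := psub_neq0 hAO; have hb := psub_neq0 hBO.
have el := is_line_through hl hOl hA hAO; have el' := is_line_through hl' hOl' hB hBO.
subst l l'; case: hq => /same_side_cross hf /same_side_cross hg.
have hc := not_parallel_cross ha hb hnp.
have area := parallelogram_cross ha hb hY hY' hmid.
rewrite /para_area !dist_line_through // sin_angle //.
rewrite scaled_products_sub ?pnorm_gt0 // -area normrM.
by field; rewrite normr_eq0 hc !gt_eqF ?pnorm_gt0.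
Qed.
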